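(* Let $(D,S,B)$ be a datum. Then the space $\mathrm{Spc}(D,S)$, together with the map $\mathrm{Supp}\colon \mathrm{Ob}(D)\to 2^{\mathrm{Spc}(D,S)}$, $a\mapsto \{P\in \mathrm{Spc}(D,S)\mid a\notin P\}$, is the universal support datum of $(D,S)$: for every support datum $(Y,\mathrm{Supp}_Y)$ of $(D,S)$ there exists a unique map of support data $\mathrm{Spc}(D,S)\to Y$.
   Context: $\mathrm{Cat}_\infty^{\mathrm{perf}}$ denotes the $\infty$-category of small idempotent-complete stable $\infty$-categories (with its standard symmetric monoidal structure). A datum $(D,S,B)$ consists of algebra objects $B,S$ of $\mathrm{Cat}_\infty^{\mathrm{perf}}$, a homomorphism $B\to S$, and a left $S$-module $D$ in $\mathrm{Cat}_\infty^{\mathrm{perf}}$; the action is written $s\otimes a$. An $S$-submodule of $D$ is a thick subcategory $I\subset D$ with $s\otimes a\in I$ for all $s\in S$, $a\in I$. An $S$-submodule $P$ is prime if for every family $\{I_i\}$ of $S$-submodules each strictly containing $P$, the intersection $\bigcap_i I_i$ strictly contains $P$. $\mathrm{Spc}(D,S)$ is the set of prime $S$-submodules, with the coarsest topology in which every set $\mathrm{Supp}(a)=\{P\mid a\notin P\}$ ($a\in D$) is closed. A support datum of $(D,S)$ is a $T_0$ topological space $X$ with a map $\mathrm{Supp}\colon\mathrm{Ob}(D)\to 2^X$ such that: (1) $\mathrm{Supp}(a)=\mathrm{Supp}(a[1])$; (2) $\mathrm{Supp}(s\otimes a)\subset\mathrm{Supp}(a)$ for $s\in S,a\in D$; (3)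 $\mathrm{Supp}(a\oplus b)=\mathrm{Supp}(a)\cup\mathrm{Supp}(b)$; (4) $\mathrm{Supp}(b)\subset\mathrm{Supp}(a)\cup\mathrm{Supp}(c)$ for every exact triangle $a\to b\to c$; (5) for distinct $S$-submodules $I\neq J$ of $D$, $\bigcup_{a\in I}\mathrm{Supp}(a)\neq\bigcup_{b\in J}\mathrm{Supp}(b)$; (6) the topology of $X$ is the coarsest one in which all $\mathrm{Supp}(a)$, $a\in D$, are closed. A map of support data $X\to Y$ is a continuous map $f$ with $f^{-1}(\mathrm{Supp}_Y(a))=\mathrm{Supp}_X(a)$ for all $a\in D$. *)

(** The object-level data of a datum (D,S,B).  [Ob] is the set of isomorphism
    classes of objects of the idempotent-complete stable oo-category D, with its
    triangulated structure on objects: zero object, suspension [shift] (a bijection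
    on iso classes with inverse [unshift]), direct sum, and the relation
    [tri a b c] := "there is an exact (cofiber) triangle a -> b -> c -> a[1]".
    [SOb]/[BOb] are the objects of the algebras S and B, [hom] the object part of
    B -> S, and [act s a] = s (x) a. The recorded axioms hold in every stable
    oo-category (rotation axiom TR2, TR1, split triangles). *)
Record Datum := {
  Ob : Type;
  SOb : Type;
  BOb : Type;
  hom : BOb -> SOb;
  zero : Ob;
  shift : Ob -> Ob;
  unshift : Ob -> Ob;
  oplus : Ob -> Ob -> Ob;
  act : SOb -> Ob -> Ob;
  tri : Ob -> Ob -> Ob -> Prop;
  shiftK : forall a, unshift (shift a) = a;
  unshiftK : forall a, shift (unshift a) = a;
  tri_id : forall a, tri a a zero;
  tri_split : forall a b, tri a (oplus a b) b;
  tri_rot : forall a b c, tri a b c -> tri b c (shift a);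
  tri_rotinv : forall a b c, tri a b c -> tri (unshift c) a b
}.

Section Defs.
Variable D : Datum.

Definition thick (I : Ob D -> Prop) : Prop :=
  I (zero D) /\
  (forall a, I a -> I (shift D a)) /\
  (forall a, I a -> I (unshift D a)) /\
  (forall a b c, tri D a b c ->
     (I a -> I b -> I c) /\ (I b -> I c -> I a) /\ (I a -> I c -> I b)) /\
  (forall a b, I (oplus D a b) -> I a /\ I b).

Definition submodule (I : Ob D -> Prop) : Prop :=
  thick I /\ (forall (s : SOb D) a, I a -> I (act D s a)).

Definition strictly_contains (J P : Ob D -> Prop) : Prop :=
  (forall a, P a -> J a) /\ exists a, J a /\ ~ P a.

Definition prime (P : Ob D -> Prop) : Prop :=
  submodule P /\
  forall Fam : (Ob D -> Prop) -> Prop,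
    (forall I, Fam I -> submodule I /\ strictly_contains I P) ->
    strictly_contains (fun a => forall I, Fam I -> I a) P.

Definition Spc : Type := { P : Ob D -> Prop | prime P }.

Definition SuppSpc (a : Ob D) (P : Spc) : Prop := ~ proj1_sig P a.

End Defs.

Definition is_topology {X : Type} (O : (X -> Prop) -> Prop) : Prop :=
  O (fun _ => True) /\
  (forall F : (X -> Prop) -> Prop, (forall U, F U -> O U) ->
      O (fun x => exists U, F U /\ U x)) /\
  (forall U V, O U -> O V -> O (fun x => U x /\ V x)).

(** open sets of the coarsest topology in which all [C a] are closed *)
Definition coarsest_closing {X A : Type} (C : A -> X -> Prop) (U : X -> Prop) : Prop :=
  forall O : (X -> Prop) -> Prop, is_topology O ->
    (forall a, O (fun x => ~ C a x)) -> O U.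

Definition T0 {X : Type} (O : (X -> Prop) -> Prop) : Prop :=
  forall x y : X, x <> y -> exists U, O U /\ ~ (U x <-> U y).

Definition continuous {X Y : Type} (OX : (X -> Prop) -> Prop)
  (OY : (Y -> Prop) -> Prop) (f : X -> Y) : Prop :=
  forall U, OY U -> OX (fun x => U (f x)).

Definition OSpc (D : Datum) : (Spc D -> Prop) -> Prop :=
  coarsest_closing (@SuppSpc D).

(** support datum (Y, OY, sigma) of (D,S); sigma a = Supp_Y(a) as a subset of Y *)
Record support_datum (D : Datum) {Y : Type} (OY : (Y -> Prop) -> Prop)
    (sigma : Ob D -> Y -> Prop) : Prop := {
  sd_top : is_topology OY;
  sd_T0 : T0 OY;
  sd1 : forall a y, sigma a y <-> sigma (shift D a) y;
  sd2 : forall s a y, sigma (act D s a) y -> sigma a y;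
  sd3 : forall a b y, sigma (oplus D a b) y <-> (sigma a y \/ sigma b y);
  sd4 : forall a b c, tri D a b c -> forall y, sigma b y -> sigma a y \/ sigma c y;
  sd5 : forall I J, submodule D I -> submodule D J -> ~ (forall a, I a <-> J a) ->
          ~ (forall y, (exists a, I a /\ sigma a y) <-> (exists b, J b /\ sigma b y));
  sd6 : forall U, OY U <-> coarsest_closing sigma U
}.

Definition support_map {D : Datum} {X Y : Type} (OX : (X -> Prop) -> Prop)
  (sX : Ob D -> X -> Prop) (OY : (Y -> Prop) -> Prop) (sY : Ob D -> Y -> Prop)
  (f : X -> Y) : Prop :=
  continuous OX OY f /\ forall a x, sY a (f x) <-> sX a x.

From mathcomp Require classical_sets.
From Stdlib Require Import Classical FunctionalExtensionality PropExtensionality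
  ProofIrrelevance IndefiniteDescription.

(* A submodule maximal among those containing I and avoiding an object a is
   prime: every submodule strictly above it contains a.  By Zorn's lemma such
   maximal submodules exist, so the primes separate submodules, which is axiom
   (5) for Spc(D,S).
   Conversely, let (Y, σ) be a support datum and P a prime.  The intersection Q
   of the submodules strictly containing P is strictly larger than P, so by (5)
   some point y lies in the support of Q but not in that of P.  The objects
   whose support misses y form a submodule containing P; it cannot be strictly
   larger, for then it would contain Q.  Hence P is exactly the set of objects
   vanishing at y, and y is unique because Y is T0 with topology generated by
   the supports. *)

Lemma pred_ext {T : Type} (P Q : T -> Prop) : (forall x, P x <-> Q x) -> P = Q.
Proof.
intros H. apply functional_extensionality. intros x.
apply propositional_extensionality, H.
Qed.

Section CoarsestClosing.
Variables (X A : Type) (C : A -> X -> Prop).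

Lemma coarsest_closing_topology : is_topology (coarsest_closing C).
Proof.
split; [|split].
- intros O HO _. apply HO.
- intros F HF O HO HC. apply HO. intros U FU. exact (HF U FU O HO HC).
- intros U V HU HV O HO HC. apply HO; [apply HU | apply HV]; assumption.
Qed.

Lemma coarsest_closing_open_compl (a : A) : coarsest_closing C (fun x => ~ C a x).
Proof. intros O _ HC. apply HC. Qed.

Lemma coarsest_closing_T0 :
  (forall x y, (forall a, C a x <-> C a y) -> x = y) -> T0 (coarsest_closing C).
Proof.
intros Hsep x y Hxy.
destruct (not_all_ex_not _ _ (fun H => Hxy (Hsep x y H))) as [a Ha].
exists (fun z => ~ C a z). split; [apply coarsest_closing_open_compl|].
destruct (classic (C a x)), (classic (C a y)); tauto.
Qed.

Lemma T0_coarsest_closing_eq (O : (X -> Prop) -> Prop) :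
  T0 O -> (forall U, O U -> coarsest_closing C U) ->
  forall x y, (forall a, C a x <-> C a y) -> x = y.
Proof.
intros HT0 HO x y Hxy. apply NNPP. intros Hne.
destruct (HT0 x y Hne) as [U [OU HU]]. apply HU.
apply (HO U OU (fun V => V x <-> V y)).
- split; [tauto | split].
  + intros F HF.
    split; intros [V [FV Vz]]; exists V; split; auto; apply (HF V FV); exact Vz.
  + intros V W HV HW. tauto.
- intros a. specialize (Hxy a). tauto.
Qed.

End CoarsestClosing.

Lemma preimage_topology {X Y : Type} (OX : (X -> Prop) -> Prop) (f : X -> Y) :
  is_topology OX -> is_topology (fun V : Y -> Prop => OX (fun x => V (f x))).
Proof.
intros [Htop [Hunion Hinter]]. split; [exact Htop | split].
- intros F HF.
  replace (fun x => exists U, F U /\ U (f x))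
    with (fun x => exists W, (exists V, F V /\ W = (fun x => V (f x))) /\ W x).
  + apply Hunion. intros W [V [FV ->]]. exact (HF V FV).
  + apply pred_ext. intros x. split.
    * intros [W [[V [FV ->]] Wx]]. exists V. auto.
    * intros [V [FV Vx]]. exists (fun x => V (f x)). split; [exists V|]; auto.
- intros V W. apply Hinter.
Qed.

Lemma continuous_coarsest_closing {X Y A : Type} (CX : A -> X -> Prop)
    (CY : A -> Y -> Prop) (f : X -> Y) :
  (forall a x, CY a (f x) <-> CX a x) ->
  continuous (coarsest_closing CX) (coarsest_closing CY) f.
Proof.
intros Hf U HU.
apply (HU (fun V => coarsest_closing CX (fun x => V (f x)))).
- apply preimage_topology, coarsest_closing_topology.
- intros a. replace (fun x => ~ CY a (f x)) with (fun x => ~ CX a x).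
  + apply coarsest_closing_open_compl.
  + apply pred_ext. intros x. rewrite (Hf a x). reflexivity.
Qed.

Lemma support_map_coarsest {D : Datum} {X Y : Type} (sX : Ob D -> X -> Prop)
    (OY : (Y -> Prop) -> Prop) (sY : Ob D -> Y -> Prop) (f : X -> Y) :
  (forall U, OY U -> coarsest_closing sY U) ->
  (forall a x, sY a (f x) <-> sX a x) ->
  support_map (coarsest_closing sX) sX OY sY f.
Proof.
intros HOY Hf. split; [|exact Hf].
intros U OU. exact (continuous_coarsest_closing _ _ _ Hf U (HOY U OU)).
Qed.

Definition supp_union {D : Datum} {Y : Type} (sigma : Ob D -> Y -> Prop)
    (I : Ob D -> Prop) (y : Y) : Prop :=
  exists a, I a /\ sigma a y.

Lemma supp_union_mono {D : Datum} {Y : Type} (sigma : Ob D -> Y -> Prop)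
    (I J : Ob D -> Prop) (y : Y) :
  (forall a, I a -> J a) -> supp_union sigma I y -> supp_union sigma J y.
Proof. intros HIJ [a [Ia Ha]]. exists a. auto. Qed.

Section Submodules.
Context {D : Datum}.

Lemma submodule_intro (I : Ob D -> Prop) :
  I (zero D) ->
  (forall a, I a -> I (shift D a)) ->
  (forall a, I a -> I (unshift D a)) ->
  (forall a b c, tri D a b c -> I a -> I c -> I b) ->
  (forall a b, I (oplus D a b) -> I a /\ I b) ->
  (forall s a, I a -> I (act D s a)) ->
  submodule D I.
Proof.
intros H0 Hs Hu Hmid Hsum Hact.
split; [|exact Hact].
split; [exact H0 | split; [exact Hs | split; [exact Hu | split; [|exact Hsum]]]].
intros a b c T. split; [|split].
- intros Ha Hb. exact (Hmid _ _ _ (tri_rot D _ _ _ T) Hb (Hs a Ha)).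
- intros Hb Hc. exact (Hmid _ _ _ (tri_rotinv D _ _ _ T) (Hu c Hc) Hb).
- exact (Hmid a b c T).
Qed.

Lemma submodule_ext (I J : Ob D -> Prop) :
  submodule D I -> (forall a, I a <-> J a) -> submodule D J.
Proof. intros HI HIJ. rewrite <- (pred_ext _ _ HIJ). exact HI. Qed.

Section SubmoduleClosure.
Context {I : Ob D -> Prop} (HI : submodule D I).

Lemma submodule_zero : I (zero D).
Proof. exact (proj1 (proj1 HI)). Qed.

Lemma submodule_shift a : I a -> I (shift D a).
Proof. exact (proj1 (proj2 (proj1 HI)) a). Qed.

Lemma submodule_unshift a : I a -> I (unshift D a).
Proof. exact (proj1 (proj2 (proj2 (proj1 HI))) a). Qed.

Lemma submodule_shift_iff a : I (shift D a) <-> I a.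
Proof.
split; [|apply submodule_shift].
intros Ha. rewrite <- (shiftK D a). apply submodule_unshift, Ha.
Qed.

Lemma submodule_tri a b c : tri D a b c -> I a -> I c -> I b.
Proof.
intros T. exact (proj2 (proj2 (proj1 (proj2 (proj2 (proj2 (proj1 HI)))) a b c T))).
Qed.

Lemma submodule_summand a b : I (oplus D a b) -> I a /\ I b.
Proof. exact (proj2 (proj2 (proj2 (proj2 (proj1 HI)))) a b). Qed.

Lemma submodule_oplus a b : I a -> I b -> I (oplus D a b).
Proof. apply submodule_tri, tri_split. Qed.

Lemma submodule_act s a : I a -> I (act D s a).
Proof. exact (proj2 HI s a). Qed.

End SubmoduleClosure.

Lemma submodule_bigcap (Fam : (Ob D -> Prop) -> Prop) :
  (forall I, Fam I -> submodule D I) -> submodule D (fun a => forall I, Fam I -> I a).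
Proof.
intros HF. apply submodule_intro.
- intros I FI. exact (submodule_zero (HF I FI)).
- intros a Ha I FI. exact (submodule_shift (HF I FI) _ (Ha I FI)).
- intros a Ha I FI. exact (submodule_unshift (HF I FI) _ (Ha I FI)).
- intros a b c T Ha Hc I FI. exact (submodule_tri (HF I FI) _ _ _ T (Ha I FI) (Hc I FI)).
- intros a b Hab. split; intros I FI; apply (submodule_summand (HF I FI) _ _ (Hab I FI)).
- intros s a Ha I FI. exact (submodule_act (HF I FI) s _ (Ha I FI)).
Qed.

Lemma submodule_chain_union (K : Type) (X : K -> Ob D -> Prop) :
  inhabited K -> (forall i, submodule D (X i)) ->
  (forall i j, (forall a, X i a -> X j a) \/ (forall a, X j a -> X i a)) ->
  submodule D (fun a => exists i, X i a).
Proof.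
intros [i0] HX Htot. apply submodule_intro.
- exists i0. exact (submodule_zero (HX i0)).
- intros a [i Ha]. exists i. exact (submodule_shift (HX i) _ Ha).
- intros a [i Ha]. exists i. exact (submodule_unshift (HX i) _ Ha).
- intros a b c T [i Ha] [j Hc].
  destruct (Htot i j) as [Hij | Hji].
  + exists j. exact (submodule_tri (HX j) _ _ _ T (Hij a Ha) Hc).
  + exists i. exact (submodule_tri (HX i) _ _ _ T Ha (Hji c Hc)).
- intros a b [i Hab]. destruct (submodule_summand (HX i) _ _ Hab). split; exists i; assumption.
- intros s a [i Ha]. exists i. exact (submodule_act (HX i) s _ Ha).
Qed.

Lemma prime_of_maximal_avoiding (P : Ob D -> Prop) (a : Ob D) :
  submodule D P -> ~ P a ->
  (forall J, submodule D J -> strictly_contains D J P -> J a) -> prime D P.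
Proof.
intros HP Pa Hmax. split; [exact HP|]. intros Fam HFam. split.
- intros x Px I FI. exact (proj1 (proj2 (HFam I FI)) x Px).
- exists a. split; [|exact Pa].
  intros I FI. destruct (HFam I FI) as [HI HIP]. exact (Hmax I HI HIP).
Qed.

Lemma exists_maximal_submodule_avoiding (I : Ob D -> Prop) (a : Ob D) :
  submodule D I -> ~ I a ->
  exists P, submodule D P /\ (forall x, I x -> P x) /\ ~ P a /\
    (forall J, submodule D J -> strictly_contains D J P -> J a).
Proof.
intros HI Ia.
set (avoiding := fun X => submodule D X /\ (forall x, I x -> X x) /\ ~ X a).
(* The empty set is allowed so that the empty chain has an upper bound. *)
destruct (@classical_sets.Zorn_bigcup (Ob D) (fun X => avoiding X \/ forall x, ~ X x))
  as [P [HP Pmax]].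
- intros F HF Ftot.
  destruct (classic (exists x X, F X /\ X x)) as [[x0 [X0 [FX0 X0x0]]] | Hempty].
  2:{ right. intros x [X FX Xx]. apply Hempty. exists x, X. auto. }
  left.
  assert (Havoid : forall X x, F X -> X x -> avoiding X).
  { intros X x FX Xx. destruct (HF X FX) as [HX | HX]; [exact HX | destruct (HX x Xx)]. }
  assert (Hunion : submodule D
            (fun y => exists i : {X | F X /\ exists x, X x}, proj1_sig i y)).
  { apply submodule_chain_union.
    - exact (inhabits (exist _ X0 (conj FX0 (ex_intro _ x0 X0x0)))).
    - intros i. destruct (proj2_sig i) as [FX [x Xx]]. exact (proj1 (Havoid _ x FX Xx)).
    - intros i j. exact (Ftot _ _ (proj1 (proj2_sig i)) (proj1 (proj2_sig j))). }
  split; [|split].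
  + apply (submodule_ext _ _ Hunion). intros y. split.
    * intros [i Xy]. exists (proj1_sig i); [exact (proj1 (proj2_sig i)) | exact Xy].
    * intros [X FX Xy]. exists (exist _ X (conj FX (ex_intro _ y Xy))). exact Xy.
  + intros x Ix. exists X0; [exact FX0|].
    exact (proj1 (proj2 (Havoid X0 x0 FX0 X0x0)) x Ix).
  + intros [X FX Xa]. exact (proj2 (proj2 (Havoid X a FX Xa)) Xa).
- assert (HPav : avoiding P).
  { destruct HP as [HP | HP]; [exact HP|]. exfalso.
    apply (Pmax I); [split | left; split; [exact HI | split; [auto | exact Ia]]].
    + intros x Px. destruct (HP x Px).
    + intros HIP. exact (HP _ (HIP _ (submodule_zero HI))). }
  destruct HPav as [HPsub [HIP Pa]].
  exists P. split; [exact HPsub | split; [exact HIP | split; [exact Pa|]]].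
  intros J HJ [HPJ [b [Jb Pb]]]. apply NNPP. intros Ja.
  apply (Pmax J).
  + split; [exact HPJ|]. intros HJP. exact (Pb (HJP b Jb)).
  + left. split; [exact HJ | split; [intros x Ix; exact (HPJ x (HIP x Ix)) | exact Ja]].
Qed.

Lemma exists_prime_separating (I : Ob D -> Prop) (a : Ob D) :
  submodule D I -> ~ I a ->
  exists P : Spc D, (forall x, I x -> proj1_sig P x) /\ ~ proj1_sig P a.
Proof.
intros HI Ia.
destruct (exists_maximal_submodule_avoiding _ _ HI Ia) as [P [HP [HIP [Pa Pmax]]]].
exists (exist _ P (prime_of_maximal_avoiding _ _ HP Pa Pmax)). split; assumption.
Qed.

End Submodules.

Section Spectrum.
Variable D : Datum.

Lemma Spc_ext (P Q : Spc D) : (forall a, proj1_sig P a <-> proj1_sig Q a) -> P = Q.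
Proof.
destruct P as [P HP], Q as [Q HQ]. simpl. intros HPQ.
destruct (pred_ext _ _ HPQ). f_equal. apply proof_irrelevance.
Qed.

Lemma Spc_submodule (P : Spc D) : submodule D (proj1_sig P).
Proof. exact (proj1 (proj2_sig P)). Qed.

Lemma SuppSpc_union_separates (I J : Ob D -> Prop) (a : Ob D) :
  submodule D J -> I a -> ~ J a ->
  exists P, supp_union (SuppSpc D) I P /\ ~ supp_union (SuppSpc D) J P.
Proof.
intros HJ Ia Ja.
destruct (exists_prime_separating _ _ HJ Ja) as [P [HJP Pa]].
exists P. split.
- exists a. split; assumption.
- intros [b [Jb Pb]]. exact (Pb (HJP b Jb)).
Qed.

Lemma Spc_support_datum : support_datum D (OSpc D) (SuppSpc D).
Proof.
split.
- apply coarsest_closing_topology.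
- apply coarsest_closing_T0. intros P Q HPQ. apply Spc_ext. intros a.
  specialize (HPQ a). unfold SuppSpc in HPQ.
  destruct (classic (proj1_sig P a)), (classic (proj1_sig Q a)); tauto.
- intros a P. unfold SuppSpc. rewrite (submodule_shift_iff (Spc_submodule P)). reflexivity.
- intros s a P Ha HPa. exact (Ha (submodule_act (Spc_submodule P) s _ HPa)).
- intros a b P. unfold SuppSpc. split.
  + intros Hab. apply NNPP. intros Hn.
    apply Hab, (submodule_oplus (Spc_submodule P)); apply NNPP; auto.
  + intros [Ha | Hb] Hab; destruct (submodule_summand (Spc_submodule P) _ _ Hab); auto.
- intros a b c T P Hb. apply NNPP. intros Hn.
  apply Hb, (submodule_tri (Spc_submodule P) _ _ _ T); apply NNPP; auto.
- intros I J HI HJ HIJ Heq.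
  destruct (not_all_ex_not _ _ HIJ) as [a Ha].
  assert (Ha' : (I a /\ ~ J a) \/ (J a /\ ~ I a))
    by (destruct (classic (I a)), (classic (J a)); tauto).
  destruct Ha' as [[Ia Ja] | [Ja Ia]].
  + destruct (SuppSpc_union_separates _ _ _ HJ Ia Ja) as [P [HIP HJP]].
    exact (HJP (proj1 (Heq P) HIP)).
  + destruct (SuppSpc_union_separates _ _ _ HI Ja Ia) as [P [HJP HIP]].
    exact (HIP (proj2 (Heq P) HJP)).
- intros U. reflexivity.
Qed.

End Spectrum.

Section Universality.
Variables (D : Datum) (Y : Type) (OY : (Y -> Prop) -> Prop) (sigma : Ob D -> Y -> Prop).
Hypothesis HY : support_datum D OY sigma.

Lemma vanishing_submodule (y : Y) :
  ~ sigma (zero D) y -> submodule D (fun a => ~ sigma a y).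
Proof.
intros H0. apply submodule_intro.
- exact H0.
- intros a Ha Hs. apply Ha, (sd1 _ _ _ HY), Hs.
- intros a Ha Hs. apply Ha. rewrite <- (unshiftK D a), <- (sd1 _ _ _ HY). exact Hs.
- intros a b c T Ha Hc Hb. destruct (sd4 _ _ _ HY _ _ _ T y Hb); auto.
- intros a b Hab. split; intros Hs; apply Hab, (sd3 _ _ _ HY); auto.
- intros s a Ha Hs. apply Ha, (sd2 _ _ _ HY s), Hs.
Qed.

Lemma supp_union_strict (I J : Ob D -> Prop) :
  submodule D I -> submodule D J -> strictly_contains D J I ->
  exists y, supp_union sigma J y /\ ~ supp_union sigma I y.
Proof.
intros HI HJ [HIJ [b [Jb Ib]]]. apply NNPP. intros Hno.
apply (sd5 _ _ _ HY I J HI HJ).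
- intros H. apply Ib, H, Jb.
- intros y. split; [apply supp_union_mono, HIJ|].
  intros HyJ. apply NNPP. intros HyI. apply Hno. exists y. split; assumption.
Qed.

Lemma exists_point_of_prime (P : Ob D -> Prop) :
  prime D P -> exists y, forall a, sigma a y <-> ~ P a.
Proof.
intros [HP Hprime].
set (Above := fun I => submodule D I /\ strictly_contains D I P).
set (Q := fun x => forall I, Above I -> I x).
assert (HQ : submodule D Q) by (apply submodule_bigcap; intros I [HI _]; exact HI).
destruct (supp_union_strict P Q HP HQ (Hprime Above (fun I h => h))) as [y [yQ yP]].
assert (Hvan : forall a, P a -> ~ sigma a y).
{ intros a Pa Ha. apply yP. exists a. split; assumption. }
exists y. intros a. split; [intros Ha Pa; exact (Hvan a Pa Ha)|].
intros Pa. apply NNPP. intros Ha.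
(* Otherwise the objects vanishing at y lie strictly above P, hence contain Q *)
assert (HK : Above (fun a => ~ sigma a y)).
{ split; [apply vanishing_submodule, Hvan, (submodule_zero HP)|].
  split; [exact Hvan|]. exists a. split; assumption. }
destruct yQ as [b [Qb Hb]]. exact (Qb _ HK Hb).
Qed.

Definition point_of_prime (P : Spc D) : Y :=
  proj1_sig (constructive_indefinite_description _ (exists_point_of_prime _ (proj2_sig P))).

Lemma point_of_primeE (a : Ob D) (P : Spc D) :
  sigma a (point_of_prime P) <-> SuppSpc D a P.
Proof.
unfold point_of_prime.
destruct (constructive_indefinite_description _ _) as [y Hy]. apply Hy.
Qed.

Lemma point_of_prime_support_map :
  support_map (OSpc D) (SuppSpc D) OY sigma point_of_prime.
Proof.
apply support_map_coarsest; [intros U; apply (sd6 _ _ _ HY) | exact point_of_primeE].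
Qed.

Lemma support_map_eq_point_of_prime (g : Spc D -> Y) :
  support_map (OSpc D) (SuppSpc D) OY sigma g -> forall P, g P = point_of_prime P.
Proof.
intros [_ Hg] P.
apply (T0_coarsest_closing_eq _ _ sigma OY (sd_T0 _ _ _ HY) (fun U => proj1 (sd6 _ _ _ HY U))).
intros a. rewrite (Hg a P), point_of_primeE. reflexivity.
Qed.

End Universality.

Theorem mainTheorem1 (D : Datum) :
  support_datum D (OSpc D) (@SuppSpc D) /\
  forall (Y : Type) (OY : (Y -> Prop) -> Prop) (sigma : Ob D -> Y -> Prop),
    support_datum D OY sigma ->
    exists f : Spc D -> Y,
      support_map (OSpc D) (@SuppSpc D) OY sigma f /\
      forall g : Spc D -> Y,
        support_map (OSpc D) (@SuppSpc D) OY sigma g -> forall P, g P = f P.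
Proof.
split; [exact (Spc_support_datum D)|].
intros Y OY sigma HY. exists (point_of_prime D Y OY sigma HY). split.
- exact (point_of_prime_support_map D Y OY sigma HY).
- exact (support_map_eq_point_of_prime D Y OY sigma HY).
Qed.
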